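(* Let $E,F$ be vector lattices with $F$ Dedekind complete, and let $S,T\in\mathcal{U}_+(E,F)$ be disjoint elements of the vector lattice $\mathcal{U}(E,F)$, i.e. $S\wedge T=0$. Then for every $x\in E$, every weak order unit $u$ of $F$ and every $\varepsilon>0$ there exist a partition of unity $(\pi_\alpha)_{\alpha\in\Delta}$ in $\mathfrak{P}(F)$ and a family $(x_\alpha)_{\alpha\in\Delta}$ of fragments of $x$ such that \[ \pi_\alpha\big(Tx_\alpha+S(x-x_\alpha)\big)\le\varepsilon u\quad\text{for all }\alpha\in\Delta. \]
   Context: For a vector lattice $E$, an element $z$ is a fragment (component) of $x\in E$ if $|z|\wedge|x-z|=0$; $\mathcal{F}_x$ denotes the set of fragments of $x$. An operator $T\colon E\to F$ between vector lattices is orthogonally additive if $T(x+y)=Tx+Ty$ whenever $|x|\wedge|y|=0$; it is order bounded if it maps order bounded sets to order bounded sets. $\mathcal{U}(E,F)$ (abstract Uryson operators) is the set of orthogonally additive order bounded (in general nonlinear) operators $E\to F$, ordered by $S\le T$ iff $Tx-Sx\ge 0$ for all $x\in E$; $\mathcal{U}_+(E,F)$ is its positive cone. When $F$ is Dedekind complete, $\mathcal{U}(E,F)$ is a Dedekind complete vector lattice. $\mathfrak{P}(F)$ denotes the Boolean algebra of band (order) projections of the Dedekind complete vector lattice $F$, with $\rho'\le\rho''$ iff $\rho'\rho''=\rho'$, $\rho'\wedge\rho''=\rho'\rho''$, and $\rho^\perp=I_F-\rho$. A partition of unity in $\mathfrak{P}(F)$ is a family $(\rho_\xi)$ of band projections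 with $\rho_\xi\wedge\rho_\eta=0$ for $\xi\ne\eta$ and $\sup_\xi\rho_\xi=I_F$. An element $u\in F_+$ is a weak order unit if $\{u\}^{\perp\perp}=F$. *)

From Stdlib Require Import Reals.
Open Scope R_scope.

Record VectorLattice := {
  vl_car :> Type;
  vadd : vl_car -> vl_car -> vl_car;
  vopp : vl_car -> vl_car;
  vzero : vl_car;
  vscal : R -> vl_car -> vl_car;
  vle : vl_car -> vl_car -> Prop;
  vjoin : vl_car -> vl_car -> vl_car;
  vmeet : vl_car -> vl_car -> vl_car;
  vaddA : forall x y z, vadd x (vadd y z) = vadd (vadd x y) z;
  vaddC : forall x y, vadd x y = vadd y x;
  vadd0 : forall x, vadd x vzero = x;
  vaddN : forall x, vadd x (vopp x) = vzero;
  vscalA : forall a b x, vscal a (vscal b x) = vscal (a * b) x;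
  vscal1 : forall x, vscal 1 x = x;
  vscalDr : forall a x y, vscal a (vadd x y) = vadd (vscal a x) (vscal a y);
  vscalDl : forall a b x, vscal (a + b) x = vadd (vscal a x) (vscal b x);
  vle_refl : forall x, vle x x;
  vle_trans : forall x y z, vle x y -> vle y z -> vle x z;
  vle_antisym : forall x y, vle x y -> vle y x -> x = y;
  vjoin_ub1 : forall x y, vle x (vjoin x y);
  vjoin_ub2 : forall x y, vle y (vjoin x y);
  vjoin_lub : forall x y z, vle x z -> vle y z -> vle (vjoin x y) z;
  vmeet_lb1 : forall x y, vle (vmeet x y) x;
  vmeet_lb2 : forall x y, vle (vmeet x y) y;
  vmeet_glb : forall x y z, vle z x -> vle z y -> vle z (vmeet x y);
  vle_add : forall x y z, vle x y -> vle (vadd x z) (vadd y z);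
  vle_scal : forall a x y, 0 <= a -> vle x y -> vle (vscal a x) (vscal a y)
}.

Arguments vadd {v}. Arguments vopp {v}. Arguments vzero {v}.
Arguments vscal {v}. Arguments vle {v}. Arguments vjoin {v}. Arguments vmeet {v}.

Definition vsub {E : VectorLattice} (x y : E) : E := vadd x (vopp y).

Definition vabs {E : VectorLattice} (x : E) : E := vjoin x (vopp x).

Definition disjoint {E : VectorLattice} (x y : E) : Prop :=
  vmeet (vabs x) (vabs y) = vzero.

Definition fragment {E : VectorLattice} (x z : E) : Prop :=
  vmeet (vabs z) (vabs (vsub x z)) = vzero.

Definition is_sup {E : VectorLattice} (A : E -> Prop) (s : E) : Prop :=
  (forall y, A y -> vle y s) /\
  (forall b, (forall y, A y -> vle y b) -> vle s b).

Definition dedekind_complete (F : VectorLattice) : Prop :=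
  forall A : F -> Prop, (exists y, A y) -> (exists b, forall y, A y -> vle y b) ->
  exists s, is_sup A s.

(** weak order unit: u >= 0 and {u}^{perp perp} = F *)
Definition weak_order_unit {F : VectorLattice} (u : F) : Prop :=
  vle vzero u /\
  (forall y z : F, disjoint z u -> disjoint y z).

Definition order_bounded_set {E : VectorLattice} (A : E -> Prop) : Prop :=
  exists a b : E, forall x, A x -> vle a x /\ vle x b.

Definition order_bounded {E F : VectorLattice} (T : E -> F) : Prop :=
  forall A : E -> Prop, order_bounded_set A ->
    order_bounded_set (fun y : F => exists x, A x /\ y = T x).

Definition orthogonally_additive {E F : VectorLattice} (T : E -> F) : Prop :=
  forall x y : E, disjoint x y -> T (vadd x y) = vadd (T x) (T y).

Definition uryson {E F : VectorLattice} (T : E -> F) : Prop :=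
  orthogonally_additive T /\ order_bounded T.

Definition op_le {E F : VectorLattice} (S T : E -> F) : Prop :=
  forall x, vle (S x) (T x).

Definition uryson_inf {E F : VectorLattice} (S T W : E -> F) : Prop :=
  uryson W /\ op_le W S /\ op_le W T /\
  (forall R : E -> F, uryson R -> op_le R S -> op_le R T -> op_le R W).

Definition is_band {F : VectorLattice} (B : F -> Prop) : Prop :=
  B vzero /\
  (forall x y, B x -> B y -> B (vadd x y)) /\
  (forall a x, B x -> B (vscal a x)) /\
  (forall x y, B x -> vle (vabs y) (vabs x) -> B y) /\
  (forall A : F -> Prop, (forall y, A y -> B y) -> forall s, is_sup A s -> B s).

Definition disj_compl {F : VectorLattice} (B : F -> Prop) : F -> Prop :=
  fun y => forall x, B x -> disjoint x y.

Definition band_projection {F : VectorLattice} (rho : F -> F) : Prop :=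
  exists B : F -> Prop, is_band B /\
    forall x, B (rho x) /\ disj_compl B (vsub x (rho x)).

Definition proj_le {F : VectorLattice} (r1 r2 : F -> F) : Prop :=
  forall x, r1 (r2 x) = r1 x.

Definition partition_of_unity {F : VectorLattice} {D : Type} (pi : D -> F -> F) : Prop :=
  (forall a, band_projection (pi a)) /\
  (* pi_a /\ pi_b = pi_a pi_b = 0 for a <> b *)
  (forall a b, a <> b -> forall x, pi a (pi b x) = vzero) /\
  (* sup_a pi_a = I_F in P(F) *)
  (forall a, proj_le (pi a) (fun x => x)) /\
  (forall rho, band_projection rho -> (forall a, proj_le (pi a) rho) ->
     forall x, rho x = x).

(* If [S /\ T = 0] in [U(E,F)], then for every [x] the infimum of [T y + S (x - y)] over
   the fragments [y] of [x] is [0]: the operator [z |-> inf_y (T y + S (z - y))] is again an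
   abstract Uryson operator (orthogonal additivity comes from splitting fragments along a
   disjoint sum, a Riesz decomposition), and it lies below [S] (take [y = 0]) and below [T]
   (take [y = z]), hence below [S /\ T = 0].
   Consequently, in every nonzero band of [F] some fragment [y] leaves a nonzero band on which
   [T y + S (x - y) - eps u] has no positive part: otherwise the projection of [eps u] onto the
   band would minorize all these sums, hence vanish, which is impossible for a weak unit [u].
   A maximal (Zorn) family of pairwise disjoint bands of this kind therefore exhausts [F], and
   its band projections form the required partition of unity. *)

From Stdlib Require Import Reals Lra ClassicalEpsilon FunctionalExtensionality PropExtensionality Classical ProofIrrelevance.
From mathcomp Require classical_sets.
Open Scope R_scope.

Infix "+v" := vadd (at level 50, left associativity).
Infix "-v" := vsub (at level 50, left associativity).
Infix "<=v" := vle (at level 70, no associativity).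

Arguments vaddA {v}. Arguments vaddC {v}. Arguments vadd0 {v}. Arguments vaddN {v}.
Arguments vscalA {v}. Arguments vscal1 {v}. Arguments vscalDr {v}. Arguments vscalDl {v}.
Arguments vle_refl {v}. Arguments vle_trans {v}. Arguments vle_antisym {v}.
Arguments vjoin_ub1 {v}. Arguments vjoin_ub2 {v}. Arguments vjoin_lub {v}.
Arguments vmeet_lb1 {v}. Arguments vmeet_lb2 {v}. Arguments vmeet_glb {v}.
Arguments vle_add {v}. Arguments vle_scal {v}.

Section VectorLatticeTheory.
Context {V : VectorLattice}.

Lemma add0v (x : V) : vzero +v x = x.
Proof. rewrite vaddC; apply vadd0. Qed.
Lemma addNv (x : V) : vopp x +v x = vzero.
Proof. rewrite vaddC; apply vaddN. Qed.
Lemma subvv (x : V) : x -v x = vzero.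
Proof. apply vaddN. Qed.
Lemma addvCA (a b c : V) : a +v (b +v c) = b +v (a +v c).
Proof. rewrite !vaddA, (vaddC a b); reflexivity. Qed.
Lemma addvAC (a b c : V) : a +v b +v c = a +v c +v b.
Proof. rewrite <- !vaddA, (vaddC b c); reflexivity. Qed.
Lemma addvACA (a b c d : V) : (a +v b) +v (c +v d) = (a +v c) +v (b +v d).
Proof. rewrite !vaddA, (addvAC a b c); reflexivity. Qed.
Lemma addIv (x y z : V) : x +v z = y +v z -> x = y.
Proof. intro H. rewrite <- (vadd0 x), <- (vadd0 y), <- (vaddN z), !vaddA, H; reflexivity. Qed.
Lemma addvI (x y z : V) : z +v x = z +v y -> x = y.
Proof. rewrite (vaddC z x), (vaddC z y); apply addIv. Qed.
Lemma oppv_unique (x y : V) : x +v y = vzero -> y = vopp x.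
Proof. intro H; apply (addvI _ _ x); rewrite H, vaddN; reflexivity. Qed.
Lemma oppvK (x : V) : vopp (vopp x) = x.
Proof. symmetry; apply oppv_unique, addNv. Qed.
Lemma oppv0 : vopp (@vzero V) = vzero.
Proof. symmetry; apply oppv_unique, vadd0. Qed.
Lemma oppvD (x y : V) : vopp (x +v y) = vopp x +v vopp y.
Proof. symmetry; apply oppv_unique. rewrite addvACA, !vaddN, vadd0; reflexivity. Qed.
Lemma subv0 (x : V) : x -v vzero = x.
Proof. unfold vsub; rewrite oppv0; apply vadd0. Qed.
Lemma subvK (x y : V) : x -v y +v y = x.
Proof. unfold vsub; rewrite <- vaddA, addNv, vadd0; reflexivity. Qed.
Lemma addvK (x y : V) : x +v y -v y = x.
Proof. unfold vsub; rewrite <- vaddA, vaddN, vadd0; reflexivity. Qed.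
Lemma subvKC (x y : V) : x +v (y -v x) = y.
Proof. rewrite vaddC; apply subvK. Qed.
Lemma subv0_eq (x y : V) : x -v y = vzero -> x = y.
Proof. intro H; rewrite <- (subvK x y), H; apply add0v. Qed.
Lemma oppvB (x y : V) : vopp (x -v y) = y -v x.
Proof. unfold vsub; rewrite oppvD, oppvK, vaddC; reflexivity. Qed.
Lemma subvDD (a b c d : V) : (a +v b) -v (c +v d) = (a -v c) +v (b -v d).
Proof. unfold vsub; rewrite oppvD, addvACA; reflexivity. Qed.
Lemma sub0v (x : V) : vzero -v x = vopp x.
Proof. apply add0v. Qed.
Lemma subvACA (a b c d : V) : (a -v b) -v (c -v d) = (a -v c) -v (b -v d).
Proof. unfold vsub. rewrite !oppvD, !oppvK, addvACA, (vaddC (vopp b) d). reflexivity. Qed.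
Lemma subvBB (y p q : V) : (y -v p) -v (y -v q) = q -v p.
Proof. rewrite subvACA, subvv, sub0v, oppvB; reflexivity. Qed.

Lemma scalv0 (a : R) : vscal a (@vzero V) = vzero.
Proof. apply (addIv _ _ (vscal a vzero)). rewrite <- vscalDr, !vadd0, add0v; reflexivity. Qed.
Lemma scal0v (x : V) : vscal 0 x = vzero.
Proof. apply (addIv _ _ (vscal 0 x)). rewrite <- vscalDl, add0v, Rplus_0_l; reflexivity. Qed.
Lemma scalvN (a : R) (x : V) : vscal a (vopp x) = vopp (vscal a x).
Proof. apply oppv_unique. rewrite <- vscalDr, vaddN; apply scalv0. Qed.
Lemma scalNv (a : R) (x : V) : vscal (- a) x = vopp (vscal a x).
Proof. apply oppv_unique. rewrite <- vscalDl, Rplus_opp_r; apply scal0v. Qed.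
Lemma scalv_eq0 (e : R) (x : V) : 0 < e -> vscal e x = vzero -> x = vzero.
Proof. intros He H. rewrite <- (vscal1 x). replace 1 with (/ e * e) by (field; lra).
 rewrite <- vscalA, H, scalv0; reflexivity. Qed.

Lemma le_add2 (a b c d : V) : a <=v b -> c <=v d -> a +v c <=v b +v d.
Proof. intros H1 H2. apply vle_trans with (b +v c). apply vle_add; auto.
 rewrite (vaddC b c), (vaddC b d); apply vle_add; auto. Qed.
Lemma le_addl (a b c : V) : a <=v b -> c +v a <=v c +v b.
Proof. intros; apply le_add2; auto using vle_refl. Qed.
Lemma le_opp (a b : V) : a <=v b -> vopp b <=v vopp a.
Proof. intro H. pose proof (vle_add _ _ (vopp a +v vopp b) H) as H'.
 replace (a +v (vopp a +v vopp b)) with (vopp b) in H' by (rewrite vaddA, vaddN, add0v; reflexivity).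
 replace (b +v (vopp a +v vopp b)) with (vopp a) in H' by (rewrite addvCA, vaddN, vadd0; reflexivity).
 exact H'. Qed.
Lemma le_sub0 (a b : V) : a <=v b -> vzero <=v b -v a.
Proof. intro H; rewrite <- (vaddN a); apply vle_add; auto. Qed.
Lemma sub0_le (a b : V) : vzero <=v b -v a -> a <=v b.
Proof. intro H; rewrite <- (add0v a), <- (subvK b a); apply vle_add; auto. Qed.
Lemma le_subl (a b c : V) : a <=v c +v b -> a -v b <=v c.
Proof. intro H; rewrite <- (addvK c b); apply vle_add; auto. Qed.
Lemma le_subr (a b c : V) : a -v b <=v c -> a <=v c +v b.
Proof. intro H; rewrite <- (subvK a b); apply vle_add; auto. Qed.
Lemma le_addsub (a b c : V) : a +v b <=v c -> a <=v c -v b.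
Proof. intro H; rewrite <- (addvK a b); apply vle_add; auto. Qed.
Lemma le_add_sub (a b c : V) : a <=v c -v b -> a +v b <=v c.
Proof. intro H; rewrite <- (subvK c b); apply vle_add; auto. Qed.
Lemma le_sub_swap (a b c : V) : a -v b <=v c -> a -v c <=v b.
Proof. intro H. apply le_subr in H. rewrite vaddC in H. apply le_subl; auto. Qed.
Lemma le_addr_ge0 (a b : V) : vzero <=v b -> a <=v a +v b.
Proof. intro H; rewrite <- (vadd0 a) at 1; apply le_addl; auto. Qed.
Lemma le_sub_ge0 (a b : V) : vzero <=v b -> a -v b <=v a.
Proof. intro H; apply le_subl, le_addr_ge0; auto. Qed.
Lemma ge0_opp (a : V) : vzero <=v a -> vopp a <=v vzero.
Proof. intro H; rewrite <- oppv0; apply le_opp; auto. Qed.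
Lemma le0_opp (a : V) : a <=v vzero -> vzero <=v vopp a.
Proof. intro H; rewrite <- oppv0; apply le_opp; auto. Qed.
Lemma add_ge0 (a b : V) : vzero <=v a -> vzero <=v b -> vzero <=v a +v b.
Proof. intros; rewrite <- (vadd0 vzero); apply le_add2; auto. Qed.
Lemma scal_ge0 (r : R) (a : V) : 0 <= r -> vzero <=v a -> vzero <=v vscal r a.
Proof. intros; rewrite <- (scalv0 r); apply vle_scal; auto. Qed.
Lemma addvv_ge0 (a : V) : vzero <=v a +v a -> vzero <=v a.
Proof. intro H. apply (vle_scal (/2)) in H; [|lra].
 rewrite scalv0, <- (vscal1 a), <- vscalDl, vscalA in H.
 replace (/2 * (1+1)) with 1 in H by field. rewrite vscal1 in H; exact H. Qed.

Lemma join_le (x y z : V) : x <=v z -> y <=v z -> vjoin x y <=v z.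
Proof. apply vjoin_lub. Qed.
Lemma join_comm (x y : V) : vjoin x y = vjoin y x.
Proof. apply vle_antisym; apply join_le; auto using vjoin_ub1, vjoin_ub2. Qed.
Lemma meet_comm (x y : V) : vmeet x y = vmeet y x.
Proof. apply vle_antisym; apply vmeet_glb; auto using vmeet_lb1, vmeet_lb2. Qed.
Lemma join_l (x y : V) : y <=v x -> vjoin x y = x.
Proof. intro; apply vle_antisym; [apply join_le; auto using vle_refl | apply vjoin_ub1]. Qed.
Lemma meet_l (x y : V) : x <=v y -> vmeet x y = x.
Proof. intro; apply vle_antisym; [apply vmeet_lb1 | apply vmeet_glb; auto using vle_refl]. Qed.
Lemma join_mono (a b c d : V) : a <=v b -> c <=v d -> vjoin a c <=v vjoin b d.
Proof. intros; apply join_le; eauto using vle_trans, vjoin_ub1, vjoin_ub2. Qed.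
Lemma meet_mono (a b c d : V) : a <=v b -> c <=v d -> vmeet a c <=v vmeet b d.
Proof. intros; apply vmeet_glb; eauto using vle_trans, vmeet_lb1, vmeet_lb2. Qed.
Lemma join_add (x y z : V) : vjoin x y +v z = vjoin (x +v z) (y +v z).
Proof. apply vle_antisym.
 - rewrite <- (subvK (vjoin (x +v z) (y +v z)) z). apply vle_add.
   apply join_le; apply le_addsub; auto using vjoin_ub1, vjoin_ub2.
 - apply join_le; apply vle_add; auto using vjoin_ub1, vjoin_ub2. Qed.
Lemma meet_add (x y z : V) : vmeet x y +v z = vmeet (x +v z) (y +v z).
Proof. apply vle_antisym.
 - apply vmeet_glb; apply vle_add; auto using vmeet_lb1, vmeet_lb2.
 - rewrite <- (subvK (vmeet (x +v z) (y +v z)) z). apply vle_add.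
   apply vmeet_glb; apply le_subl; auto using vmeet_lb1, vmeet_lb2. Qed.
Lemma opp_join (x y : V) : vopp (vjoin x y) = vmeet (vopp x) (vopp y).
Proof. apply vle_antisym.
 - apply vmeet_glb; apply le_opp; auto using vjoin_ub1, vjoin_ub2.
 - rewrite <- (oppvK (vmeet (vopp x) (vopp y))). apply le_opp.
   apply join_le; rewrite <- (oppvK x) at 1; rewrite <- (oppvK y) at 1; apply le_opp;
   auto using vmeet_lb1, vmeet_lb2. Qed.
Lemma opp_meet (x y : V) : vopp (vmeet x y) = vjoin (vopp x) (vopp y).
Proof. rewrite <- (oppvK x) at 1; rewrite <- (oppvK y) at 1. rewrite <- opp_join, oppvK; reflexivity. Qed.
Lemma meet_join_sum (x y : V) : vmeet x y +v vjoin x y = x +v y.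
Proof.
 assert (H : vjoin x y +v (vopp x +v vopp y) = vopp (vmeet x y)).
 { rewrite join_add, opp_meet, vaddA, vaddN, add0v, addvCA, vaddN, vadd0, join_comm; reflexivity. }
 apply (addIv _ _ (vopp x +v vopp y)).
 rewrite <- vaddA, H, vaddN, addvACA, !vaddN, vadd0; reflexivity. Qed.
Lemma sub_meet (t p r : V) : t -v vmeet p r = vjoin (t -v p) (t -v r).
Proof. unfold vsub. rewrite opp_meet, vaddC, join_add, !(vaddC t); reflexivity. Qed.

Definition vpos (x : V) : V := vjoin x vzero.
Definition vneg (x : V) : V := vjoin (vopp x) vzero.

Lemma le_abs (x : V) : x <=v vabs x.
Proof. apply vjoin_ub1. Qed.
Lemma le_abs_opp (x : V) : vopp x <=v vabs x.
Proof. apply vjoin_ub2. Qed.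
Lemma abs_ge0 (x : V) : vzero <=v vabs x.
Proof. apply addvv_ge0. rewrite <- (vaddN x). apply le_add2; auto using le_abs, le_abs_opp. Qed.
Lemma abs_opp (x : V) : vabs (vopp x) = vabs x.
Proof. unfold vabs; rewrite oppvK, join_comm; reflexivity. Qed.
Lemma abs_pos (x : V) : vzero <=v x -> vabs x = x.
Proof. intro H; apply join_l. apply vle_trans with vzero; auto using ge0_opp. Qed.
Lemma abs0 : vabs (@vzero V) = vzero.
Proof. apply abs_pos, vle_refl. Qed.
Lemma abs_tri (x y : V) : vabs (x +v y) <=v vabs x +v vabs y.
Proof. apply join_le. apply le_add2; apply le_abs.
 rewrite oppvD; apply le_add2; apply le_abs_opp. Qed.
Lemma abs_sub_le (x y : V) : vabs (x -v y) <=v vabs x +v vabs y.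
Proof. unfold vsub. rewrite <- (abs_opp y). apply abs_tri. Qed.
Lemma abs_eq0 (x : V) : vabs x = vzero -> x = vzero.
Proof. intro H. apply vle_antisym. rewrite <- H; apply le_abs.
 rewrite <- (oppvK x). apply le0_opp. rewrite <- H; apply le_abs_opp. Qed.
Lemma abs_le (x y : V) : x <=v y -> vopp x <=v y -> vabs x <=v y.
Proof. apply join_le. Qed.

Lemma pos_ge0 (x : V) : vzero <=v vpos x.
Proof. apply vjoin_ub2. Qed.
Lemma neg_ge0 (x : V) : vzero <=v vneg x.
Proof. apply vjoin_ub2. Qed.
Lemma le_pos (x : V) : x <=v vpos x.
Proof. apply vjoin_ub1. Qed.
Lemma pos_le_abs (x : V) : vpos x <=v vabs x.
Proof. apply join_le; auto using le_abs, abs_ge0. Qed.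
Lemma neg_le_abs (x : V) : vneg x <=v vabs x.
Proof. apply join_le; auto using le_abs_opp, abs_ge0. Qed.
Lemma negE (x : V) : vneg x = vopp (vmeet x vzero).
Proof. unfold vneg; rewrite opp_meet, oppv0; reflexivity. Qed.
Lemma pos_sub_neg (x : V) : vpos x -v vneg x = x.
Proof. unfold vsub; rewrite negE, oppvK, vaddC. unfold vpos.
 rewrite meet_join_sum, vadd0; reflexivity. Qed.
Lemma subKv (a b : V) : a -v (a -v b) = b.
Proof. unfold vsub at 1. rewrite oppvB. apply subvKC. Qed.
Lemma neg_posB (x : V) : vneg x = vpos x -v x.
Proof. rewrite <- (pos_sub_neg x) at 3. rewrite subKv; reflexivity. Qed.
Lemma pos_neg_disj (x : V) : vmeet (vpos x) (vneg x) = vzero.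
Proof. rewrite neg_posB. unfold vsub. rewrite <- (add0v (vpos x)) at 1.
 rewrite (vaddC (vpos x) (vopp x)), <- meet_add.
 rewrite <- (oppvK (vmeet vzero (vopp x))), opp_meet, oppv0, oppvK, join_comm.
 fold (vpos x). apply addNv. Qed.
Lemma le0_opp_sub (a b : V) : a -v b <=v vzero -> vzero <=v b -v a.
Proof. intro H; rewrite <- oppvB; apply le0_opp; auto. Qed.
Lemma meet_ge0 (a b : V) : vzero <=v a -> vzero <=v b -> vzero <=v vmeet a b.
Proof. apply vmeet_glb. Qed.
Lemma meet0_addE (p q : V) : vmeet p q = vzero -> p +v q = vjoin p q.
Proof. intro H; rewrite <- meet_join_sum, H, add0v; reflexivity. Qed.
Lemma abs_pos_neg (x : V) : vabs x = vpos x +v vneg x.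
Proof. rewrite meet0_addE by apply pos_neg_disj. apply vle_antisym.
 - apply join_le. apply vle_trans with (vpos x); [apply le_pos|apply vjoin_ub1].
   apply vle_trans with (vneg x); [apply vjoin_ub1|apply vjoin_ub2].
 - apply join_le; auto using pos_le_abs, neg_le_abs. Qed.

Lemma meet0_mono (p q p' q' : V) :
  vzero <=v p' -> p' <=v p -> vzero <=v q' -> q' <=v q -> vmeet p q = vzero -> vmeet p' q' = vzero.
Proof. intros; apply vle_antisym. rewrite <- H3; apply meet_mono; auto. apply meet_ge0; auto. Qed.
Lemma meet_addl_le (p q r : V) : vzero <=v p -> vzero <=v q -> vzero <=v r ->
  vmeet (p +v q) r <=v vmeet p r +v vmeet q r.
Proof. intros Hp Hq Hr. set (t := vmeet (p +v q) r).
 rewrite vaddC. apply le_subr. apply vmeet_glb.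
 - rewrite sub_meet. rewrite <- (join_l q vzero) by auto. apply join_mono.
   apply le_subl; rewrite vaddC; apply vmeet_lb1.
   apply le_subl; rewrite add0v; apply vmeet_lb2.
 - apply vle_trans with t. apply le_sub_ge0, meet_ge0; auto. apply vmeet_lb2. Qed.
Lemma meet_addl_eq0 (p q r : V) : vzero <=v p -> vzero <=v q -> vzero <=v r ->
  vmeet p r = vzero -> vmeet q r = vzero -> vmeet (p +v q) r = vzero.
Proof. intros. apply vle_antisym. rewrite <- (vadd0 vzero), <- H2 at 1. rewrite <- H3. apply meet_addl_le; auto.
 apply meet_ge0; auto; apply add_ge0; auto. Qed.

Lemma disj_sym (a b : V) : disjoint a b -> disjoint b a.
Proof. unfold disjoint; rewrite meet_comm; auto. Qed.
Lemma disj_solid (a a' b : V) : vabs a' <=v vabs a -> disjoint a b -> disjoint a' b.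
Proof. unfold disjoint; intros; eapply meet0_mono; eauto using abs_ge0, vle_refl. Qed.
Lemma disj_add (a b c : V) : disjoint a c -> disjoint b c -> disjoint (a +v b) c.
Proof. unfold disjoint; intros. eapply meet0_mono with (p := vabs a +v vabs b); auto using abs_ge0, vle_refl, abs_tri.
 apply meet_addl_eq0; auto using abs_ge0. Qed.
Lemma disj_opp (a b : V) : disjoint a b -> disjoint (vopp a) b.
Proof. unfold disjoint; rewrite abs_opp; auto. Qed.
Lemma disj_sub (a b c : V) : disjoint a c -> disjoint b c -> disjoint (a -v b) c.
Proof. intros; apply disj_add; auto using disj_opp. Qed.
Lemma disj0 (b : V) : disjoint vzero b.
Proof. unfold disjoint; rewrite abs0. apply meet_l, abs_ge0. Qed.
Lemma disj_self (a : V) : disjoint a a -> a = vzero.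
Proof. unfold disjoint; intro H; rewrite meet_l in H by apply vle_refl; apply abs_eq0; auto. Qed.
Lemma abs_disj_le (a b : V) : disjoint a b -> vabs a <=v vabs (a +v b).
Proof. intro H. apply sub0_le. apply le0_opp_sub.
 unfold disjoint in H. rewrite <- H. apply vmeet_glb.
 - apply le_sub_ge0, abs_ge0.
 - apply le_subl. rewrite vaddC. replace a with ((a +v b) -v b) at 1 by apply addvK.
   apply abs_sub_le. Qed.
Lemma abs_disjD (a b : V) : disjoint a b -> vabs (a +v b) = vabs a +v vabs b.
Proof. intro H. apply vle_antisym. apply abs_tri.
 rewrite meet0_addE by exact H. apply join_le. apply abs_disj_le; auto.
 rewrite vaddC. apply abs_disj_le, disj_sym; auto. Qed.

Lemma meet0_natmul (p q : V) (n : nat) : vzero <=v p -> vzero <=v q ->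
  vmeet p q = vzero -> vmeet (vscal (INR n) p) q = vzero.
Proof. intros Hp Hq H. induction n.
 - simpl. rewrite scal0v. apply meet_l; auto.
 - rewrite S_INR, vscalDl, vscal1. apply meet_addl_eq0; auto. apply scal_ge0; auto using pos_INR. Qed.
Lemma meet0_scal (k : R) (p q : V) : 0 <= k -> vzero <=v p -> vzero <=v q ->
  vmeet p q = vzero -> vmeet (vscal k p) q = vzero.
Proof. intros Hk Hp Hq H. destruct (INR_unbounded k) as [n Hn].
 apply meet0_mono with (p := vscal (INR n) p) (q := q); auto using vle_refl, scal_ge0, meet0_natmul.
 apply sub0_le. replace (vscal (INR n) p -v vscal k p) with (vscal (INR n - k) p).
 apply scal_ge0; auto; lra.
 unfold Rminus, vsub. rewrite vscalDl, scalNv; reflexivity. Qed.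
Lemma abs_scal_le (r : R) (a : V) : vabs (vscal r a) <=v vscal (Rabs r) (vabs a).
Proof. destruct (Rle_or_lt 0 r) as [H|H].
 - rewrite Rabs_pos_eq by auto. apply abs_le. apply vle_scal; auto using le_abs.
   rewrite <- scalvN. apply vle_scal; auto using le_abs_opp.
 - rewrite Rabs_left by auto. apply abs_le.
   replace (vscal r a) with (vscal (- r) (vopp a)). apply vle_scal; [lra| apply le_abs_opp].
   rewrite scalNv, scalvN, oppvK; reflexivity.
   rewrite <- scalNv. apply vle_scal; [lra| apply le_abs]. Qed.
Lemma disj_scal (r : R) (a b : V) : disjoint a b -> disjoint (vscal r a) b.
Proof. unfold disjoint; intro H.
 apply meet0_mono with (p := vscal (Rabs r) (vabs a)) (q := vabs b); auto using abs_ge0, vle_refl, abs_scal_le.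
 apply meet0_scal; auto using abs_ge0, Rabs_pos. Qed.

(* [a^+ + |v| = a^+ \/ |v| <= g] bounds [A] by [g - |v|], whence
   [s^+ /\ |v| = s^+ + |v| - g <= 0]. *)
Lemma disj_sup (A : V -> Prop) (s v : V) :
  (forall a, A a -> disjoint a v) -> is_sup A s -> disjoint s v.
Proof. intros HA [Hub Hl].
 destruct (classic (exists a0, A a0)) as [[a0 Ha0]|Hne].
 - unfold disjoint. rewrite abs_pos_neg. apply meet_addl_eq0; auto using pos_ge0, neg_ge0, abs_ge0.
   + set (g := vjoin (vpos s) (vabs v)).
     assert (Hs : s <=v g -v (vabs v)).
     { apply Hl. intros a Ha. apply vle_trans with (vpos a). apply le_pos.
       apply le_addsub. rewrite meet0_addE.
       - apply join_mono; [|apply vle_refl]. apply join_mono; [apply Hub; auto| apply vle_refl].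
       - apply meet0_mono with (p := vabs a) (q := (vabs v)); auto using pos_ge0, abs_ge0, pos_le_abs, vle_refl.
          apply HA; auto. }
     assert (Hp : vpos s <=v g -v (vabs v)).
     { apply join_le; auto. apply le_sub0, vjoin_ub2. }
     apply vle_antisym.
     * assert (E : vmeet (vpos s) (vabs v) = vpos s +v (vabs v) -v g).
       { rewrite <- (meet_join_sum (vpos s) (vabs v)). rewrite addvK. reflexivity. }
       rewrite E. apply le_subl. rewrite add0v. apply le_add_sub. exact Hp.
     * apply meet_ge0; auto using pos_ge0, abs_ge0.
   + apply meet0_mono with (p := vabs a0) (q := (vabs v)); auto using neg_ge0, abs_ge0, vle_refl.
     apply vle_trans with (vneg a0); auto using neg_le_abs. apply join_mono; auto using vle_refl.
     apply le_opp; auto. apply HA; auto.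
 - assert (H : s <=v s -v vabs s). { apply Hl. intros a Ha. exfalso; eauto. }
   assert (Hz : s = vzero).
   { apply abs_eq0. apply vle_antisym; auto using abs_ge0.
     apply le_add_sub in H. apply (vle_add _ _ (vopp s)) in H. rewrite vaddC, vaddA, addNv, add0v, vaddN in H. exact H. }
   rewrite Hz. apply disj0. Qed.

Lemma disj_compl_band (A : V -> Prop) : is_band (disj_compl A).
Proof. unfold disj_compl. repeat split.
 - intros; apply disj_sym, disj0.
 - intros x y Hx Hy z Hz. apply disj_sym, disj_add; apply disj_sym; auto.
 - intros a x Hx z Hz. apply disj_sym, disj_scal, disj_sym; auto.
 - intros x y Hx Hxy z Hz. apply disj_sym. apply disj_solid with x; auto. apply disj_sym; auto.
 - intros A' HA' s Hs z Hz. apply disj_sym. apply disj_sup with A'; auto.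
   intros a Ha. apply disj_sym; auto. Qed.

Lemma sub_le0 (a b : V) : a -v b <=v vzero -> a <=v b.
Proof. intro H; apply le_subr in H; rewrite add0v in H; exact H. Qed.
Lemma pos_disj_le (a b : V) : disjoint a b -> vpos a <=v vpos (a +v b).
Proof. intro H. apply sub_le0. unfold disjoint in H. rewrite <- H. apply vmeet_glb.
 - apply vle_trans with (vpos a). apply le_sub_ge0, pos_ge0. apply pos_le_abs.
 - apply vle_trans with (vneg b); [|apply neg_le_abs]. apply le_subl. rewrite vaddC. apply join_le.
   + replace a with ((a +v b) +v vopp b) at 1 by (rewrite <- vaddA, vaddN, vadd0; reflexivity).
     apply le_add2. apply le_pos. apply vjoin_ub1.
   + apply add_ge0; auto using pos_ge0, neg_ge0. Qed.
Lemma pos_disjD (a b : V) : disjoint a b -> vpos (a +v b) = vpos a +v vpos b.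
Proof. intro H. apply vle_antisym.
 - apply join_le. apply le_add2; apply le_pos. apply add_ge0; apply pos_ge0.
 - rewrite meet0_addE. apply join_le. apply pos_disj_le; auto.
   rewrite vaddC; apply pos_disj_le, disj_sym; auto.
   apply meet0_mono with (p := vabs a) (q := vabs b); auto using pos_ge0, pos_le_abs. Qed.
Lemma neg_disjD (a b : V) : disjoint a b -> vneg (a +v b) = vneg a +v vneg b.
Proof. intro H. change (vpos (vopp (a +v b)) = vpos (vopp a) +v vpos (vopp b)). rewrite oppvD. apply pos_disjD.
 apply disj_opp, disj_sym, disj_opp, disj_sym; auto. Qed.

Lemma meet_split_disj (p r s : V) : vzero <=v p -> vzero <=v r -> vzero <=v s ->
  vmeet r s = vzero -> p <=v r +v s -> p = vmeet p r +v vmeet p s.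
Proof. intros Hp Hr Hs Hrs H. apply vle_antisym.
 - rewrite vaddC. apply le_subr.
   apply vmeet_glb. apply le_sub_ge0, meet_ge0; auto.
   rewrite sub_meet, subvv. apply join_le; auto. apply le_subl. rewrite vaddC; auto.
 - rewrite meet0_addE. apply join_le; apply vmeet_lb1.
   apply meet0_mono with (p := r) (q := s); auto using meet_ge0, vmeet_lb2. Qed.

Definition frag_part (y z : V) : V :=
  vmeet (vpos y) (vpos z) -v vmeet (vneg y) (vneg z).

Lemma abs_frag_part_le (y z : V) : vabs (frag_part y z) <=v vabs y.
Proof. unfold frag_part. eapply vle_trans. apply abs_sub_le.
 rewrite !abs_pos by (apply meet_ge0; auto using pos_ge0, neg_ge0).
 rewrite abs_pos_neg. apply le_add2; apply vmeet_lb1. Qed.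

(* Riesz decomposition of [y^+] along [z1^+ + z2^+] and of [y^-] along [z1^- + z2^-]. *)
Lemma frag_part_spec (y w z1 z2 : V) : disjoint y w -> disjoint z1 z2 ->
  y +v w = z1 +v z2 ->
  fragment z1 (frag_part y z1) /\ y = frag_part y z1 +v frag_part y z2.
Proof. intros Hyw Hz Heq.
 assert (Pe : vpos y +v vpos w = vpos z1 +v vpos z2).
 { rewrite <- !pos_disjD, Heq; auto. }
 assert (Ne : vneg y +v vneg w = vneg z1 +v vneg z2).
 { rewrite <- !neg_disjD, Heq; auto. }
 assert (Dz : forall f : V -> V, (forall x, vzero <=v f x) -> (forall x, f x <=v vabs x) -> vmeet (f z1) (f z2) = vzero).
 { intros f Hf1 Hf2. apply meet0_mono with (p := vabs z1) (q := vabs z2); auto. }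
 assert (Dy : forall f : V -> V, (forall x, vzero <=v f x) -> (forall x, f x <=v vabs x) -> vmeet (f y) (f w) = vzero).
 { intros f Hf1 Hf2. apply meet0_mono with (p := vabs y) (q := vabs w); auto. }
 split.
 - assert (Ez : z1 = frag_part y z1 +v frag_part w z1).
   { rewrite <- (pos_sub_neg z1) at 1. unfold frag_part. rewrite <- subvDD.
     rewrite (meet_comm (vpos y)), (meet_comm (vpos w)), (meet_comm (vneg y)), (meet_comm (vneg w)).
     rewrite <- !meet_split_disj; auto using pos_ge0, neg_ge0.
     apply (Dy vneg); auto using neg_ge0, neg_le_abs.
     rewrite Ne. apply le_addr_ge0, neg_ge0.
     apply (Dy vpos); auto using pos_ge0, pos_le_abs.
     rewrite Pe. apply le_addr_ge0, pos_ge0. }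
   unfold fragment. replace (z1 -v frag_part y z1) with (frag_part w z1).
   apply meet0_mono with (p := vabs y) (q := vabs w); auto using abs_ge0, abs_frag_part_le.
   rewrite Ez at 2. unfold vsub. rewrite (vaddC (frag_part y z1)), <- vaddA, vaddN, vadd0; reflexivity.
 - rewrite <- (pos_sub_neg y) at 1. unfold frag_part. rewrite <- subvDD.
   rewrite <- !meet_split_disj; auto using pos_ge0, neg_ge0.
   all: try (apply (Dz vneg); auto using neg_ge0, neg_le_abs).
   all: try (apply (Dz vpos); auto using pos_ge0, pos_le_abs).
   all: try (rewrite <- Ne; apply le_addr_ge0, neg_ge0).
   all: try (rewrite <- Pe; apply le_addr_ge0, pos_ge0). Qed.

Lemma frag_decomp (z1 z2 y : V) : disjoint z1 z2 -> fragment (z1 +v z2) y ->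
  exists y1 y2, fragment z1 y1 /\ fragment z2 y2 /\ y = y1 +v y2.
Proof. intros Hz Hy. set (w := (z1 +v z2) -v y).
 assert (E : y +v w = z1 +v z2) by (unfold w; apply subvKC).
 destruct (frag_part_spec y w z1 z2 Hy Hz E) as [H1 H2].
 destruct (frag_part_spec y w z2 z1 Hy (disj_sym _ _ Hz)) as [H3 _].
 rewrite E; apply vaddC.
 exists (frag_part y z1), (frag_part y z2); auto. Qed.

Lemma frag_le (z y : V) : fragment z y -> vabs y <=v vabs z /\ vabs (z -v y) <=v vabs z.
Proof. intro H. assert (E : vabs z = vabs y +v vabs (z -v y)).
 { rewrite <- abs_disjD by exact H. rewrite subvKC; reflexivity. }
 rewrite E. split. apply le_addr_ge0, abs_ge0. rewrite vaddC; apply le_addr_ge0, abs_ge0. Qed.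
Lemma frag0 (z : V) : fragment z vzero.
Proof. apply disj0. Qed.
Lemma frag_refl (z : V) : fragment z z.
Proof. unfold fragment. rewrite subvv. apply disj_sym, disj0. Qed.
Lemma frag_add (z1 z2 y1 y2 : V) : disjoint z1 z2 -> fragment z1 y1 -> fragment z2 y2 ->
  fragment (z1 +v z2) (y1 +v y2) /\ disjoint y1 y2 /\ disjoint (z1 -v y1) (z2 -v y2).
Proof. intros Hz H1 H2. destruct (frag_le _ _ H1) as [A1 B1]. destruct (frag_le _ _ H2) as [A2 B2].
 assert (G : forall a b, vabs a <=v vabs z1 -> vabs b <=v vabs z2 -> disjoint a b).
 { intros a b Ha Hb. apply disj_solid with z1; auto. apply disj_sym, disj_solid with z2; auto. apply disj_sym; auto. }
 assert (G' : forall a b, vabs a <=v vabs z2 -> vabs b <=v vabs z1 -> disjoint a b).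
 { intros a b Ha Hb. apply disj_sym; auto. }
 repeat split; auto.
 - unfold fragment. fold (disjoint (y1 +v y2) ((z1 +v z2) -v (y1 +v y2))). rewrite subvDD.
   apply disj_add; apply disj_sym; apply disj_add; apply disj_sym; auto. Qed.

End VectorLatticeTheory.

Definition is_inf {F : VectorLattice} (A : F -> Prop) (m : F) : Prop :=
  (forall y, A y -> vle m y) /\
  (forall b, (forall y, A y -> vle b y) -> vle b m).

Section BandProjection.
Context {F : VectorLattice} (HF : dedekind_complete F).

Lemma inf_exists (A : F -> Prop) (l : F) :
  (exists y, A y) -> (forall y, A y -> l <=v y) -> exists m, is_inf A m.
Proof. intros [y0 Hy0] Hl.
 destruct (HF (fun y => A (vopp y))) as [s [Hs1 Hs2]].
 - exists (vopp y0); rewrite oppvK; auto.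
 - exists (vopp l). intros y Hy. rewrite <- (oppvK y); apply le_opp; auto.
 - exists (vopp s). split.
   + intros y Hy. rewrite <- (oppvK y). apply le_opp, Hs1. rewrite oppvK; auto.
   + intros l' Hl'. rewrite <- (oppvK l'). apply le_opp, Hs2. intros y Hy.
     rewrite <- (oppvK y). apply le_opp; auto. Qed.

(* The component of [y >= 0] in the band [disj_compl A] is the supremum of the
   elements of that band lying in [[0, y]]. *)
Lemma bproj_exists_pos (A : F -> Prop) (y : F) : vzero <=v y ->
  exists p, disj_compl A p /\ disj_compl (disj_compl A) (y -v p) /\ vzero <=v p /\ p <=v y.
Proof. intro Hy. set (B := disj_compl A).
 destruct (disj_compl_band A) as [B0 [Badd [Bscal [Bsol Bsup]]]]. fold B in B0, Badd, Bscal, Bsol, Bsup.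
 set (P := fun b => B b /\ vzero <=v b /\ b <=v y).
 destruct (HF P) as [s [Hs1 Hs2]].
 - exists vzero; repeat split; auto using vle_refl.
 - exists y; intros b [_ [_ H]]; auto.
 - assert (Hs0 : vzero <=v s) by (apply Hs1; repeat split; auto using vle_refl).
   assert (Hsy : s <=v y) by (apply Hs2; intros b [_ [_ H]]; auto).
   assert (HsB : B s) by (apply (Bsup P); [intros b [H _]; auto | split; auto]).
   exists s; repeat split; auto.
   intros b Hb. unfold disjoint.
   set (c := vmeet (vabs b) (vabs (y -v s))).
   assert (Hc0 : vzero <=v c) by (apply meet_ge0; apply abs_ge0).
   assert (HcB : B c).
   { apply Bsol with b; auto. rewrite (abs_pos c) by auto. apply vmeet_lb1. }
   assert (Hcs : c +v s <=v s).
   { apply Hs1. repeat split.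
     - apply Badd; auto.
     - apply add_ge0; auto.
     - apply le_add_sub. apply vle_trans with (vabs (y -v s)). apply vmeet_lb2.
       rewrite abs_pos. apply vle_refl. apply le_sub0; auto. }
   apply vle_antisym; auto.
   apply (vle_add _ _ (vopp s)) in Hcs. rewrite <- vaddA, vaddN, vadd0 in Hcs. exact Hcs. Qed.

Lemma bproj_exists (A : F -> Prop) (y : F) :
  exists p, disj_compl A p /\ disj_compl (disj_compl A) (y -v p).
Proof.
 destruct (bproj_exists_pos A (vpos y) (pos_ge0 y)) as [p1 [H1 [H2 _]]].
 destruct (bproj_exists_pos A (vneg y) (neg_ge0 y)) as [p2 [H3 [H4 _]]].
 exists (p1 -v p2). split.
 - intros z Hz. apply disj_sym, disj_sub; apply disj_sym; auto.
 - rewrite <- (pos_sub_neg y) at 1. rewrite subvACA. intros z Hz.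
   apply disj_sym, disj_sub; apply disj_sym; auto. Qed.

(* Projection onto the band [disj_compl A], not onto the band generated by [A]. *)
Definition bproj (A : F -> Prop) (y : F) : F :=
  proj1_sig (constructive_indefinite_description _ (bproj_exists A y)).

Lemma bproj_spec (A : F -> Prop) (y : F) :
  disj_compl A (bproj A y) /\ disj_compl (disj_compl A) (y -v bproj A y).
Proof. unfold bproj. destruct (constructive_indefinite_description _ _) as [p Hp]; exact Hp. Qed.

Lemma bproj_uniq (A : F -> Prop) (y p : F) :
  disj_compl A p -> disj_compl (disj_compl A) (y -v p) -> bproj A y = p.
Proof. intros H1 H2. destruct (bproj_spec A y) as [H3 H4].
 apply subv0_eq, disj_self.
 assert (Hin : disj_compl A (bproj A y -v p)).
 { intros z Hz. apply disj_sym, disj_sub; apply disj_sym; auto. }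
 assert (Hout : disj_compl (disj_compl A) (bproj A y -v p)).
 { rewrite <- (subvBB y p (bproj A y)). intros z Hz. apply disj_sym, disj_sub; apply disj_sym; auto. }
 apply Hout, Hin. Qed.

Lemma bproj_add (A : F -> Prop) (y z : F) : bproj A (y +v z) = bproj A y +v bproj A z.
Proof. destruct (bproj_spec A y) as [H1 H2]. destruct (bproj_spec A z) as [H3 H4].
 apply bproj_uniq.
 - intros w Hw. apply disj_sym, disj_add; apply disj_sym; auto.
 - rewrite subvDD. intros w Hw. apply disj_sym, disj_add; apply disj_sym; auto. Qed.

Lemma bproj_scal (A : F -> Prop) (r : R) (y : F) : bproj A (vscal r y) = vscal r (bproj A y).
Proof. destruct (bproj_spec A y) as [H1 H2]. apply bproj_uniq.
 - intros w Hw. apply disj_sym, disj_scal, disj_sym; auto.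
 - unfold vsub. rewrite <- scalvN, <- vscalDr. intros w Hw. apply disj_sym, disj_scal, disj_sym; auto. Qed.

Lemma bproj_opp (A : F -> Prop) (y : F) : bproj A (vopp y) = vopp (bproj A y).
Proof. apply oppv_unique. rewrite <- bproj_add, vaddN. apply bproj_uniq.
 - intros w Hw; apply disj_sym, disj0.
 - rewrite subvv. intros w Hw; apply disj_sym, disj0. Qed.

Lemma bproj_sub (A : F -> Prop) (y z : F) : bproj A (y -v z) = bproj A y -v bproj A z.
Proof. unfold vsub. rewrite bproj_add, bproj_opp; reflexivity. Qed.

Lemma bproj_pos (A : F -> Prop) (y : F) :
  vzero <=v y -> vzero <=v bproj A y /\ bproj A y <=v y.
Proof. intro Hy. destruct (bproj_exists_pos A y Hy) as [p [H1 [H2 H3]]].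
 rewrite (bproj_uniq A y p); auto. Qed.

Lemma bproj_out (A : F -> Prop) (y : F) :
  disj_compl (disj_compl A) y -> bproj A y = vzero.
Proof. intro H. apply bproj_uniq. intros w Hw; apply disj_sym, disj0. rewrite subv0; auto. Qed.

Lemma bproj_eq0 (A : F -> Prop) (y : F) :
  bproj A y = vzero -> disj_compl (disj_compl A) y.
Proof. intro H. destruct (bproj_spec A y) as [_ Hy]. rewrite H, subv0 in Hy. exact Hy. Qed.

Lemma bproj_band_projection (A : F -> Prop) : band_projection (bproj A).
Proof. exists (disj_compl A). split; [apply disj_compl_band | intro y; apply bproj_spec]. Qed.

End BandProjection.

Lemma oadd_zero {E F : VectorLattice} (T : E -> F) : orthogonally_additive T -> T vzero = vzero.
Proof. intro H. pose proof (H vzero vzero (disj0 vzero)) as K. rewrite vadd0 in K.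
 symmetry. apply (addvI _ _ (T vzero)). rewrite vadd0. exact K. Qed.

Section MixedInfimum.
Context {E F : VectorLattice} (HF : dedekind_complete F) (S T : E -> F).
Hypotheses (HS : uryson S) (HT : uryson T)
  (HSpos : forall x, vzero <=v S x) (HTpos : forall x, vzero <=v T x).

Definition mixed (z y : E) : F := T y +v S (z -v y).

Lemma mixed_ge0 (z y : E) : vzero <=v mixed z y.
Proof. apply add_ge0; auto. Qed.

Lemma mixed_add (z1 z2 y1 y2 : E) : disjoint z1 z2 -> fragment z1 y1 -> fragment z2 y2 ->
  fragment (z1 +v z2) (y1 +v y2) /\ mixed (z1 +v z2) (y1 +v y2) = mixed z1 y1 +v mixed z2 y2.
Proof. intros Hz H1 H2. destruct (frag_add z1 z2 y1 y2 Hz H1 H2) as [Hf [Hd1 Hd2]].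
 split; auto. unfold mixed. rewrite subvDD, (proj1 HS), (proj1 HT) by auto. apply addvACA. Qed.

Lemma mixed_inf_exists (z : E) :
  exists m, is_inf (fun v => exists y, fragment z y /\ v = mixed z y) m.
Proof. apply (inf_exists HF _ vzero).
 - exists (mixed z vzero), vzero; split; auto using frag0.
 - intros v [y [_ ->]]. apply mixed_ge0. Qed.

Definition mixed_inf (z : E) : F :=
  proj1_sig (constructive_indefinite_description _ (mixed_inf_exists z)).

Lemma mixed_inf_le (z y : E) : fragment z y -> mixed_inf z <=v mixed z y.
Proof. intro Hy. unfold mixed_inf. destruct (constructive_indefinite_description _ _) as [m Hm].
 apply (proj1 Hm); eauto. Qed.

Lemma mixed_inf_glb (z : E) (l : F) :
  (forall y, fragment z y -> l <=v mixed z y) -> l <=v mixed_inf z.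
Proof. intro Hl. unfold mixed_inf. destruct (constructive_indefinite_description _ _) as [m Hm].
 apply (proj2 Hm). intros v [y [Hy ->]]; auto. Qed.

Lemma mixed_inf_le_S (z : E) : mixed_inf z <=v S z.
Proof. eapply vle_trans; [apply (mixed_inf_le z vzero (frag0 z))|].
 unfold mixed. rewrite (oadd_zero T (proj1 HT)), add0v, subv0. apply vle_refl. Qed.

Lemma mixed_inf_le_T (z : E) : mixed_inf z <=v T z.
Proof. eapply vle_trans; [apply (mixed_inf_le z z (frag_refl z))|].
 unfold mixed. rewrite subvv, (oadd_zero S (proj1 HS)), vadd0. apply vle_refl. Qed.

(* Splitting a fragment of [z1 + z2] along [disjoint z1 z2] gives [>=]; adding
   fragments of [z1] and [z2] gives [<=]. *)
Lemma mixed_inf_oadd : orthogonally_additive mixed_inf.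
Proof. intros z1 z2 Hz. apply vle_antisym.
 - apply le_subr, mixed_inf_glb. intros y1 Hy1.
   apply le_sub_swap, mixed_inf_glb. intros y2 Hy2.
   apply le_sub_swap, le_subl.
   destruct (mixed_add z1 z2 y1 y2 Hz Hy1 Hy2) as [Hf He].
   rewrite <- He. apply mixed_inf_le; exact Hf.
 - apply mixed_inf_glb. intros y Hy.
   destruct (frag_decomp z1 z2 y Hz Hy) as [y1 [y2 [Hy1 [Hy2 ->]]]].
   destruct (mixed_add z1 z2 y1 y2 Hz Hy1 Hy2) as [_ ->].
   apply le_add2; apply mixed_inf_le; auto. Qed.

Lemma mixed_inf_uryson : uryson mixed_inf.
Proof. split; [exact mixed_inf_oadd |].
 intros A HA. destruct (proj2 HS A HA) as [a [b Hab]].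
 exists vzero, b. intros w [z [Hz ->]]. split.
 - apply mixed_inf_glb. intros y _. apply mixed_ge0.
 - eapply vle_trans; [apply mixed_inf_le_S|]. apply (Hab (S z)). eauto. Qed.

Lemma mixed_lbound_le0 (HST : uryson_inf S T (fun _ => vzero)) (x : E) (v : F) :
  (forall y, fragment x y -> v <=v mixed x y) -> v <=v vzero.
Proof. intro Hv. destruct HST as [_ [_ [_ Hmax]]].
 apply vle_trans with (mixed_inf x); [apply mixed_inf_glb; exact Hv|].
 exact (Hmax mixed_inf mixed_inf_uryson mixed_inf_le_S mixed_inf_le_T x). Qed.

End MixedInfimum.

Lemma zorn_maximal_family (T : Type) (P : (T -> Prop) -> Prop) :
  (forall M : (T -> Prop) -> Prop, (forall X, M X -> P X) ->
    (forall X Y, M X -> M Y -> (forall t, X t -> Y t) \/ (forall t, Y t -> X t)) ->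
    P (fun t => exists X, M X /\ X t)) ->
  exists A, P A /\ forall B, (forall t, A t -> B t) -> P B -> forall t, B t -> A t.
Proof.
 intro Hchain. destruct (@classical_sets.Zorn_bigcup T P) as [A [PA HA]].
 - intros M HM Htot.
   replace (classical_sets.bigcup M (fun X => X)) with (fun t => exists X, M X /\ X t).
   + apply Hchain; auto.
   + apply functional_extensionality; intro t. apply propositional_extensionality; split.
     * intros [X [h1 h2]]; econstructor; eauto.
     * intros [X h1 h2]; eauto.
 - exists A; split; auto.
   intros B HAB HB t HBt. apply NNPP; intro HnA.
   apply (HA B); auto. split; [exact HAB |]. intro HBA. apply HnA, HBA, HBt.
Qed.

Section Exhaustion.
Context {E F : VectorLattice} (HF : dedekind_complete F) (S T : E -> F).
Hypotheses (HS : uryson S) (HT : uryson T)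
  (HSpos : forall x, vzero <=v S x) (HTpos : forall x, vzero <=v T x)
  (HST : uryson_inf S T (fun _ => vzero)).
Variables (x : E) (u : F) (eps : R).
Hypotheses (Hu : weak_order_unit u) (Heps : 0 < eps).

Definition excess (y : E) : F := mixed S T x y -v vscal eps u.

Lemma mixed_excess (y : E) :
  mixed S T x y = vpos (excess y) -v vneg (excess y) +v vscal eps u.
Proof. unfold excess. rewrite pos_sub_neg, subvK; reflexivity. Qed.

Lemma eps_u_ge0 : vzero <=v vscal eps u.
Proof. apply scal_ge0; [lra | apply Hu]. Qed.

Lemma bproj_mixed_le (K : F -> Prop) (y : E) :
  (forall q, disj_compl K q -> disjoint q (vpos (excess y))) ->
  bproj HF K (mixed S T x y) <=v vscal eps u.
Proof. intro Hc.
 rewrite mixed_excess, bproj_add, bproj_sub, (bproj_out HF K _ Hc), sub0v.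
 destruct (bproj_pos HF K _ (neg_ge0 (excess y))) as [Hd0 _].
 destruct (bproj_pos HF K _ eps_u_ge0) as [_ He].
 apply vle_trans with (vzero +v bproj HF K (vscal eps u)).
 - apply vle_add, ge0_opp, Hd0.
 - rewrite add0v; exact He. Qed.

(* Otherwise the projection of [eps u] onto [disj_compl K] minorizes every [mixed S T x y],
   so it vanishes by [mixed_lbound_le0], and then [w] is disjoint from the weak unit [u]. *)
Lemma good_extension (K : F -> Prop) (w : F) : disj_compl K w -> w <> vzero ->
  exists y, fragment x y /\
    exists w', disj_compl (fun q => K q \/ q = vpos (excess y)) w' /\ w' <> vzero.
Proof. intros Hw Hw0. apply NNPP; intro Hno.
 assert (Hd : forall y, fragment x y -> bproj HF K (vneg (excess y)) = vzero).
 { intros y Hy. apply NNPP; intro Hnz. apply Hno. exists y; split; auto.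
   exists (bproj HF K (vneg (excess y))); split; auto.
   destruct (bproj_spec HF K (vneg (excess y))) as [Hin _].
   destruct (bproj_pos HF K _ (neg_ge0 (excess y))) as [Hp0 Hp1].
   intros q [Hq | ->]; [apply Hin; auto |].
   apply disj_sym, disj_solid with (vneg (excess y)).
   - rewrite !abs_pos; auto using neg_ge0.
   - unfold disjoint. rewrite !abs_pos by auto using pos_ge0, neg_ge0.
     rewrite meet_comm. apply pos_neg_disj. }
 assert (He : bproj HF K (vscal eps u) <=v vzero).
 { apply (mixed_lbound_le0 HF S T HS HT HSpos HTpos HST x). intros y Hy.
   destruct (bproj_pos HF K _ (mixed_ge0 S T HSpos HTpos x y)) as [_ Ha].
   eapply vle_trans; [|exact Ha].
   rewrite mixed_excess, bproj_add, bproj_sub, (Hd y Hy), subv0, vaddC.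
   apply le_addr_ge0, bproj_pos, pos_ge0. }
 assert (Hpu : bproj HF K u = vzero).
 { apply (scalv_eq0 eps); auto. rewrite <- bproj_scal.
   apply vle_antisym; [exact He | apply bproj_pos, eps_u_ge0]. }
 apply Hw0, disj_self, (proj2 Hu), (bproj_eq0 HF K u Hpu), Hw. Qed.

(* By [bproj_mixed_le], the projection of [T y + S (x - y)] onto a good band is at most
   [eps u]. *)
Definition good_band (K : F -> Prop) : Prop :=
  (exists w, disj_compl K w /\ w <> vzero) /\
  exists y, fragment x y /\ forall q, disj_compl K q -> disjoint q (vpos (excess y)).

Definition disjoint_bands (M : (F -> Prop) -> Prop) : Prop :=
  forall K1 K2, M K1 -> M K2 -> K1 <> K2 ->
  forall p q, disj_compl K1 p -> disj_compl K2 q -> disjoint p q.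

Definition admissible (M : (F -> Prop) -> Prop) : Prop :=
  (forall K, M K -> good_band K) /\ disjoint_bands M.

Lemma exists_maximal_admissible : exists M, admissible M /\
  forall M', (forall K, M K -> M' K) -> admissible M' -> forall K, M' K -> M K.
Proof. apply zorn_maximal_family. intros C HC Hchain. split.
 - intros K [M [HM HK]]. exact (proj1 (HC M HM) K HK).
 - intros K1 K2 [M1 [HM1 HK1]] [M2 [HM2 HK2]].
   destruct (Hchain M1 M2 HM1 HM2) as [h | h].
   + apply (proj2 (HC M2 HM2)); auto.
   + apply (proj2 (HC M1 HM1)); auto. Qed.

Section MaximalFamily.
Variable M : (F -> Prop) -> Prop.
Hypotheses (HM : admissible M)
  (Hmax : forall M', (forall K, M K -> M' K) -> admissible M' -> forall K, M' K -> M K).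

(* Otherwise the bands of [M] together with the one given by [good_extension]
   form a strictly larger admissible family. *)
Lemma maximal_admissible_full (w : F) :
  (forall K, M K -> forall p, disj_compl K p -> disjoint p w) -> w = vzero.
Proof. intro HwM. apply NNPP; intro Hw0.
 set (Ks := fun q => exists K, M K /\ disj_compl K q).
 assert (Hws : disj_compl Ks w) by (intros q [K [HK Hq]]; exact (HwM K HK q Hq)).
 destruct (good_extension Ks w Hws Hw0) as [y [Hy [w' [Hw' Hw'0]]]].
 set (K' := fun q => Ks q \/ q = vpos (excess y)).
 assert (Hsub : forall K, M K -> forall p, disj_compl K p -> K' p).
 { intros K HK p Hp. left; exists K; auto. }
 assert (HK' : M K').
 { apply (Hmax (fun K => M K \/ K = K')); [intros K HK; left; exact HK | | right; reflexivity].
   split.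
   - intros K [HK | ->]; [exact (proj1 HM K HK) |]. split; [exists w'; auto |].
     exists y; split; auto. intros q Hq. apply disj_sym, Hq. right; reflexivity.
   - intros K1 K2 [H1 | ->] [H2 | ->] Hne p q Hp Hq.
     + exact (proj2 HM K1 K2 H1 H2 Hne p q Hp Hq).
     + apply Hq, (Hsub K1); auto.
     + apply disj_sym, Hp, (Hsub K2); auto.
     + contradiction. }
 apply Hw'0, disj_self, Hw', (Hsub K' HK'), Hw'. Qed.

Lemma maximal_admissible_partition :
  partition_of_unity (fun a : {K | M K} => bproj HF (proj1_sig a)).
Proof. split; [| split; [| split]].
 - intro a. apply bproj_band_projection.
 - intros [Ka HKa] [Kb HKb] Hab z. simpl. apply bproj_out. intros p Hp.
   apply (proj2 HM Ka Kb HKa HKb); [| exact Hp | apply bproj_spec].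
   intros ->. apply Hab. f_equal. apply proof_irrelevance.
 - intros a z; reflexivity.
 - intros rho _ Hle z. symmetry. apply subv0_eq, maximal_admissible_full.
   intros K HK. apply (bproj_eq0 HF K (z -v rho z)).
   rewrite bproj_sub, (Hle (exist _ K HK) z : bproj HF K (rho z) = bproj HF K z), subvv.
   reflexivity. Qed.

End MaximalFamily.
End Exhaustion.

Theorem theorem3p2 (E F : VectorLattice) (HF : dedekind_complete F)
  (S T : E -> F) (HS : uryson S) (HT : uryson T)
  (HSpos : forall x, vle vzero (S x)) (HTpos : forall x, vle vzero (T x))
  (HST : uryson_inf S T (fun _ => vzero)) :
  forall (x : E) (u : F), weak_order_unit u -> forall eps : R, 0 < eps ->
  exists (D : Type) (pi : D -> F -> F) (xs : D -> E),
    partition_of_unity pi /\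
    (forall a, fragment x (xs a)) /\
    (forall a, vle (pi a (vadd (T (xs a)) (S (vsub x (xs a))))) (vscal eps u)).
Proof.
 intros x u Hu eps Heps.
 destruct (exists_maximal_admissible S T x u eps) as [M [HM Hmax]].
 assert (Hy : forall a : {K | M K}, {y | fragment x y /\
   forall q, disj_compl (proj1_sig a) q -> disjoint q (vpos (excess S T x u eps y))}).
 { intro a. apply constructive_indefinite_description, (proj1 HM _ (proj2_sig a)). }
 exists {K | M K}, (fun a => bproj HF (proj1_sig a)), (fun a => proj1_sig (Hy a)).
 split; [| split].
 - exact (maximal_admissible_partition HF S T HS HT HSpos HTpos HST x u eps Hu Heps M HM Hmax).
 - intro a. exact (proj1 (proj2_sig (Hy a))).
 - intro a. exact (bproj_mixed_le HF S T x u eps Hu Heps _ _ (proj2 (proj2_sig (Hy a)))).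
Qed.
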